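(* Let $K=\langle \mathcal{T}_{strict},\mathcal{T}_{C_1},\ldots,\mathcal{T}_{C_k},\mathcal{A}\rangle$ be a ranked $\mathcal{EL}^{+}_{\bot}$ knowledge base over $\mathcal{C}=\{C_1,\ldots,C_k\}$, and let $\mathcal{M}=\langle \Delta,<_{C_1},\ldots,<_{C_k},<,\cdot^I\rangle$ be a (finite) concept-wise multipreference interpretation. Then the global preference relation $<$ is irreflexive, transitive and well-founded.
   Context: $\mathcal{EL}^{+}_{\bot}$ concepts are built by $C::=A\mid\top\mid\bot\mid C\sqcap C\mid \exists r.C$ with $A$ a concept name and $r$ a role name; interpretations $I=\langle\Delta,\cdot^I\rangle$ are as usual ($(\exists r.C)^I=\{x\mid \exists y,(x,y)\in r^I, y\in C^I\}$ etc.); a TBox contains concept inclusions $C\sqsubseteq D$ and role inclusions $r_1\circ\cdots\circ r_n\sqsubseteq r$, an ABox contains assertions $C(a)$, $r(a,b)$; $\models$ denotes standard $\mathcal{EL}^{+}_{\bot}$ entailment. A typicality inclusion has the form $\mathbf{T}(C)\sqsubseteq D$. A ranked knowledge base over a finite set $\mathcal{C}=\{C_1,\ldots,C_k\}$ of $\mathcal{EL}^{+}_{\bot}$ concepts is a tuple $K=\langle \mathcal{T}_{strict},\mathcal{T}_{C_1},\ldots,\mathcal{T}_{C_k},\mathcal{A}\rangle$ where $\mathcal{T}_{strict}$ is a set of concept and role inclusions, $\mathcal{A}$ an ABox, and each $\mathcal{T}_{C_j}$ a finite set of pairs $(\mathbf{T}(C_j)\sqsubseteq D, r)$ with $r$ a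 non-negative integer (its rank). Specificity: for $C_h,C_j\in\mathcal{C}$, $C_h\succ C_j$ iff $\mathcal{T}_{strict}\models C_h\sqsubseteq C_j$ and $\mathcal{T}_{strict}\not\models C_j\sqsubseteq C_h$. A (finite) concept-wise multipreference interpretation is a tuple $\langle\Delta,<_{C_1},\ldots,<_{C_k},<,\cdot^I\rangle$ where $\Delta$ is a finite non-empty domain; each $<_{C_i}$ is an irreflexive, transitive, well-founded and modular relation on $\Delta$ (modular: $x<_{C_i}y$ implies $x<_{C_i}z$ or $z<_{C_i}y$ for all $z$); $x\leq_{C_j}y$ means that $y<_{C_j}x$ does not hold; the global relation $<$ is defined by: $x<y$ iff (i) $x<_{C_i}y$ for some $C_i\in\mathcal{C}$, and (ii) for all $C_j\in\mathcal{C}$, either $x\leq_{C_j}y$ or there is $C_h\in\mathcal{C}$ with $C_h\succ C_j$ and $x<_{C_h}y$; and $\cdot^I$ is an $\mathcal{EL}^{+}_{\bot}$ interpretation function extended by $(\mathbf{T}(C))^I=\min_<(C^I)=\{u\in C^I\mid \nexists z\in C^I, z<u\}$. *)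

From Stdlib Require List.
From mathcomp Require Import all_boot.
Unset Printing Implicit Defensive.

Definition cname := nat.
Definition rname := nat.
Definition iname := nat.

Inductive concept : Type :=
| CName of cname
| CTop
| CBot
| CAnd of concept & concept
| CEx of rname & concept.

Record interp := Interp {
  idom : Type;
  i_ne : inhabited idom;
  iconc : cname -> idom -> Prop;
  irole : rname -> idom -> idom -> Prop;
  iind : iname -> idom }.




Fixpoint ext (I : interp) (C : concept) : idom I -> Prop :=
  match C with
  | CName A => iconc I A
  | CTop => fun _ => True
  | CBot => fun _ => False
  | CAnd C1 C2 => fun x => ext I C1 x /\ ext I C2 x
  | CEx r C1 => fun x => exists y, irole I r x y /\ ext I C1 y
  end.

Fixpoint chain (I : interp) (r : rname) (rs : seq rname) : idom I -> idom I -> Prop :=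
  match rs with
  | [::] => irole I r
  | r' :: rs' => fun x z => exists y, irole I r x y /\ chain I r' rs' y z
  end.

(** TBox axioms: concept inclusions C [= D and role inclusions
    r1 o ... o rn [= r  (n >= 1, chain given as head r1 and tail). *)
Inductive tbox_axiom : Type :=
| CIncl of concept & concept
| RIncl of rname & seq rname & rname.

Definition sat_axiom (I : interp) (a : tbox_axiom) : Prop :=
  match a with
  | CIncl C D => forall x, ext I C x -> ext I D x
  | RIncl r1 rs r => forall x y, chain I r1 rs x y -> irole I r x y
  end.

Definition tbox := seq tbox_axiom.

Definition models (I : interp) (T : tbox) : Prop :=
  List.Forall (sat_axiom I) T.

Definition entails (T : tbox) (C D : concept) : Prop :=
  forall I : interp, models I T -> forall x, ext I C x -> ext I D x.

Inductive assertion : Type :=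
| CAssert of concept & iname
| RAssert of rname & iname & iname.

(** Ranked KB over C = {C_1,...,C_k} (given by Cs : 'I_k -> concept):
    strict TBox, for each j a finite set of ranked typicality inclusions
    (T(C_j) [= D, r), represented as pairs (D, r), and an ABox. *)
Record ranked_kb (k : nat) (Cs : 'I_k -> concept) := RankedKB {
  kb_strict : tbox;
  kb_typ : 'I_k -> seq (concept * nat);
  kb_abox : seq assertion }.

Definition more_specific (T : tbox) k (Cs : 'I_k -> concept) (h j : 'I_k) : Prop :=
  entails T (Cs h) (Cs j) /\ ~ entails T (Cs j) (Cs h).

Definition modular (D : Type) (R : D -> D -> Prop) : Prop :=
  forall x y z, R x y -> R x z \/ R z y.

Record cw_interp (k : nat) := CWInterp {
  cw_dom : finType;
  cw_ne : 0 < #|cw_dom|;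
  cw_pref : 'I_k -> cw_dom -> cw_dom -> Prop;
  cw_irr : forall i x, ~ cw_pref i x x;
  cw_trans : forall i x y z, cw_pref i x y -> cw_pref i y z -> cw_pref i x z;
  cw_wf : forall i, well_founded (cw_pref i);
  cw_mod : forall i, modular cw_dom (cw_pref i);
  cw_conc : cname -> cw_dom -> Prop;
  cw_role : rname -> cw_dom -> cw_dom -> Prop;
  cw_ind : iname -> cw_dom }.


Definition cw_le k (M : cw_interp k) (j : 'I_k) (x y : cw_dom k M) : Prop :=
  ~ cw_pref k M j y x.

Definition global_lt k (Cs : 'I_k -> concept) (T : tbox) (M : cw_interp k)
  (x y : cw_dom k M) : Prop :=
  (exists i, cw_pref k M i x y) /\
  (forall j, cw_le k M j x y \/
             exists h, more_specific T k Cs h j /\ cw_pref k M h x y).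

(** Transitivity is the heart of the matter.  If [x < y < z] and some [<_{C_h}]
    separates [x] from [y] (or [y] from [z]), modularity of [<_{C_h}] gives
    either [x <_{C_h} z] or a reversal [z <_{C_h} y] (resp. [y <_{C_h} x]),
    and the reversal is overridden by a strictly more specific concept
    separating the same pair in the right direction.  Since specificity is a
    strict order on finitely many concepts, iterating this terminates with a
    concept at least as specific as [C_h] that prefers [x] to [z].  Irreflexivity
    is inherited from the [<_{C_i}], and well-foundedness follows because the
    domain is finite. *)

From mathcomp Require Import all_boot.
From Stdlib Require Import Classical ClassicalEpsilon.

Set Implicit Arguments.
Unset Strict Implicit.

Definition classicb (P : Prop) : bool :=
  if excluded_middle_informative P then true else false.

Lemma classicbP (P : Prop) : reflect P (classicb P).
Proof. by rewrite /classicb; case: excluded_middle_informative => h; constructor. Qed.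

Lemma finite_strict_order_wf (T : finType) (R : T -> T -> Prop) :
  (forall x, ~ R x x) -> (forall x y z, R x y -> R y z -> R x z) ->
  well_founded R.
Proof.
move=> irrR trR.
pose below x := [pred y | classicb (R y x)].
suff acc_below n x : #|below x| <= n -> Acc R x by move=> x; exact: (acc_below _ x).
elim: n x => [|n IHn] x le_below_n; constructor=> y Ryx.
  have : 0 < #|below x| by apply/card_gt0P; exists y; rewrite inE; apply/classicbP.
  by rewrite leqn0 in le_below_n; rewrite (eqP le_below_n).
apply: IHn; rewrite -ltnS; apply: leq_trans le_below_n; apply: proper_card.
apply/properP; split.
  by apply/subsetP=> z; rewrite !inE => /classicbP Rzy; apply/classicbP; exact: trR Ryx.
by exists y; rewrite !inE; [apply/classicbP | apply/negP => /classicbP /irrR].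
Qed.

Section PrioritizedPreference.

Variables (I D : Type) (spec : I -> I -> Prop) (pref : I -> D -> D -> Prop).

Definition overrides (x y : D) : Prop :=
  forall j, ~ pref j y x \/ exists h, spec h j /\ pref h x y.

Definition prioritized_lt (x y : D) : Prop :=
  (exists i, pref i x y) /\ overrides x y.

Hypothesis spec_trans : forall a b c, spec a b -> spec b c -> spec a c.
Hypothesis spec_wf : well_founded spec.
Hypothesis pref_modular : forall i, modular D (pref i).

Lemma prioritized_lt_irr :
  (forall i x, ~ pref i x x) -> forall x, ~ prioritized_lt x x.
Proof. by move=> pref_irr x [[i /pref_irr]]. Qed.

Section Chain.

Variables (x y z : D).
Hypotheses (ovr_xy : overrides x y) (ovr_yz : overrides y z).

Lemma pref_chain_step h : pref h x y \/ pref h y z ->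
  pref h x z \/ exists2 h', spec h' h & pref h' x y \/ pref h' y z.
Proof.
case=> [hxy | hyz].
  case: (pref_modular z hxy) => [|hzy]; first by left.
  case: (ovr_yz h) => [/(_ hzy) [] | [h' [spec_h' h'yz]]].
  by right; exists h'; last right.
case: (pref_modular x hyz) => [hyx|]; last by left.
case: (ovr_xy h) => [/(_ hyx) [] | [h' [spec_h' h'xy]]].
by right; exists h'; last left.
Qed.

Lemma pref_chain h : pref h x y \/ pref h y z ->
  exists2 h', h' = h \/ spec h' h & pref h' x z.
Proof.
elim: h / (spec_wf h) => h _ IH /pref_chain_step [hxz | [h' spec_h' h'xyz]].
  by exists h; first left.
have [h'' h''_spec h''xz] := IH h' spec_h' h'xyz.
exists h'' => //; right; case: h''_spec => [-> // | spec_h''].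
exact: spec_trans spec_h'' spec_h'.
Qed.

Lemma overrides_trans : overrides x z.
Proof.
move=> j; case: (classic (pref j z x)) => [hzx | ]; last by left.
right; have [h [spec_h hxyz]] : exists h, spec h j /\ (pref h x y \/ pref h y z).
  case: (pref_modular y hzx) => [hzy | hyx].
    by case: (ovr_yz j) => [/(_ hzy) [] | [h [? ?]]]; exists h; split; last right.
  by case: (ovr_xy j) => [/(_ hyx) [] | [h [? ?]]]; exists h; split; last left.
have [h' h'_spec h'xz] := pref_chain hxyz.
exists h'; split=> //; case: h'_spec => [-> // | spec_h'].
exact: spec_trans spec_h' spec_h.
Qed.

End Chain.

Lemma prioritized_lt_trans x y z :
  prioritized_lt x y -> prioritized_lt y z -> prioritized_lt x z.
Proof.
move=> [[i ixy] ovr_xy] [_ ovr_yz]; split; last exact: overrides_trans.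
by case: (pref_chain ovr_xy ovr_yz (or_introl ixy)) => h _; exists h.
Qed.

End PrioritizedPreference.

Lemma entails_refl (T : tbox) (C : concept) : entails T C C.
Proof. by []. Qed.

Lemma entails_trans (T : tbox) (C D E : concept) :
  entails T C D -> entails T D E -> entails T C E.
Proof. by move=> CD DE I modI x /(CD I modI) /(DE I modI). Qed.

Section Specificity.

Variables (T : tbox) (k : nat) (Cs : 'I_k -> concept).

Lemma more_specific_irr h : ~ more_specific T k Cs h h.
Proof. by case=> _; apply; exact: entails_refl. Qed.

Lemma more_specific_trans a b c :
  more_specific T k Cs a b -> more_specific T k Cs b c -> more_specific T k Cs a c.
Proof.
move=> [ab not_ba] [bc not_cb]; split; first exact: entails_trans ab bc.
by move=> ca; apply: not_cb; exact: entails_trans ca ab.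
Qed.

Lemma more_specific_wf : well_founded (more_specific T k Cs).
Proof. exact: finite_strict_order_wf more_specific_irr more_specific_trans. Qed.

End Specificity.

Theorem proposition1 (k : nat) (Cs : 'I_k -> concept) (K : ranked_kb k Cs)
    (M : cw_interp k) :
  let lt := global_lt k Cs (kb_strict k Cs K) M in
  (forall x, ~ lt x x) /\
  (forall x y z, lt x y -> lt y z -> lt x z) /\
  well_founded lt.
Proof.
(* [lt] is [prioritized_lt (more_specific _ k Cs) (cw_pref k M)] up to unfolding. *)
move=> lt.
have lt_irr : forall x, ~ lt x x := prioritized_lt_irr (cw_irr k M).
have lt_trans : forall x y z, lt x y -> lt y z -> lt x z :=
  prioritized_lt_trans (@more_specific_trans _ k Cs) (more_specific_wf _ Cs) (cw_mod k M).
by split; [|split]; last exact: finite_strict_order_wf lt_irr lt_trans.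
Qed.
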